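(* Let $n\ge1$; for $i\in[n]$ let $d_i\ge1$, $p_{i0}<\cdots<p_{id_i}$ reals, $\mathcal{X}=\prod_i\{p_{i0},\dots,p_{id_i}\}$, $f_i:\{p_{i0},\dots,p_{id_i}\}\to[L_i,U_i]$, $g_i:\{p_{i0},\dots,p_{id_i}\}\to[L'_i,U'_i]$. Let $\phi:\prod_i[L_i,U_i]\to\mathbb{R}$ be submodular and $\varphi:\prod_i[L'_i,U'_i]\to\mathbb{R}$ supermodular, with $\phi(f_1(x_1),\dots,f_n(x_n))\ge0$ and $\varphi(g_1(x_1),\dots,g_n(x_n))>0$ for all $\boldsymbol{x}\in\mathcal{X}$. Let $\sigma=(\sigma_1,\dots,\sigma_n)$, each $\sigma_i$ a permutation of $\{0,\dots,d_i\}$, satisfy $f_i(p_{i,\sigma_i(0)})\le\cdots\le f_i(p_{i,\sigma_i(d_i)})$ and $g_i(p_{i,\sigma_i(0)})\le\cdots\le g_i(p_{i,\sigma_i(d_i)})$ for all $i$. For $\boldsymbol{j}\in\mathcal{G}=\prod_i\{0,\dots,d_i\}$ let $\psi^\sigma(\boldsymbol{j})=\phi(f_1(p_{1,\sigma_1(j_1)}),\dots,f_n(p_{n,\sigma_n(j_n)}))$ and $\theta^\sigma(\boldsymbol{j})=\varphi(g_1(p_{1,\sigma_1(j_1)}),\dots,g_n(p_{n,\sigma_n(j_n)}))$, and write $(L^{\sigma_i})^{-1}(\boldsymbol{z}_i)=A^{\sigma_i}\boldsymbol{z}_i+\boldsymbol{c}^{\sigma_i}$. Then $$\min_{\boldsymbol{x}\in\mathcal{X}}\frac{\phi(f_1(x_1),\dots,f_n(x_n))}{\varphi(g_1(x_1),\dots,g_n(x_n))}$$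 equals the optimal value of the linear program: minimize $\mu$ subject to, for every $\pi\in\Pi$ with point representation $\boldsymbol{j}^0,\dots,\boldsymbol{j}^N$, $$\mu\ge\psi^\sigma(\boldsymbol{j}^0)\rho+\sum_{t\in[N]}(\psi^\sigma(\boldsymbol{j}^t)-\psi^\sigma(\boldsymbol{j}^{t-1}))s'_{\pi_t},\qquad 1\le\theta^\sigma(\boldsymbol{j}^0)\rho+\sum_{t\in[N]}(\theta^\sigma(\boldsymbol{j}^t)-\theta^\sigma(\boldsymbol{j}^{t-1}))s'_{\pi_t},$$ and $\rho\ge s_{i1}\ge\cdots\ge s_{id_i}\ge0$, $\boldsymbol{s}'_i=A^{\sigma_i}\boldsymbol{s}_i+\boldsymbol{c}^{\sigma_i}\rho$ for all $i\in[n]$.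
   Context: $N=\sum_i d_i$. Sub/supermodularity on a box is with respect to componentwise max and min. Staircase: $\pi=(\pi_1,\dots,\pi_N)$, $\pi_t=(\pi_t(1),\pi_t(2))$, $\pi_t(1)\in[n]$ occurring exactly $d_i$ times for each $i$, $\pi_t(2)=|\{s\le t:\pi_s(1)=\pi_t(1)\}|$; $\Pi$ the set of staircases; $s'_{\pi_t}=s'_{\pi_t(1),\pi_t(2)}$; $\boldsymbol{j}^0=\boldsymbol{0}$, $\boldsymbol{j}^t=\boldsymbol{j}^{t-1}+\boldsymbol{e}_{\pi_t(1)}$. For each $i$: $T_i:\mathbb{R}^{d_i}\to\mathbb{R}^{d_i+1}$, $\lambda_{ij}=z_{ij}-z_{i,j+1}$ ($j=0,\dots,d_i$, $z_{i0}=1$, $z_{i,d_i+1}=0$), $T_i^{-1}:z_{ij}=\sum_{k=j}^{d_i}\lambda_{ik}$; $P^{\sigma_i}$ the permutation matrix with $(j,k)$ entry $1$ iff $j=\sigma_i(k)$; $L^{\sigma_i}=T_i^{-1}\circ P^{\sigma_i}\circ T_i$, an invertible affine map of $\mathbb{R}^{d_i}$. *)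

From HB Require Import structures.
From mathcomp Require Import all_boot all_order all_algebra all_fingroup.
From mathcomp Require Import reals.
Set Implicit Arguments.
Unset Strict Implicit.
Unset Printing Implicit Defensive.
Import Order.TTheory GRing.Theory Num.Theory.
Local Open Scope ring_scope.

Section Defs.
Variable R : realType.

Definition in_box n (lo hi : 'I_n -> R) (x : 'I_n -> R) :=
  forall i, lo i <= x i <= hi i.

Definition submodular_on n (lo hi : 'I_n -> R) (phi : ('I_n -> R) -> R) :=
  forall x y, in_box lo hi x -> in_box lo hi y ->
    phi (fun i => Num.max (x i) (y i)) + phi (fun i => Num.min (x i) (y i))
      <= phi x + phi y.

Definition supermodular_on n (lo hi : 'I_n -> R) (phi : ('I_n -> R) -> R) :=
  forall x y, in_box lo hi x -> in_box lo hi y ->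
    phi x + phi y <=
    phi (fun i => Num.max (x i) (y i)) + phi (fun i => Num.min (x i) (y i)).

Definition in_X n (d : 'I_n -> nat) (p : forall i, 'I_(d i).+1 -> R)
  (x : 'I_n -> R) := forall i, exists j : 'I_(d i).+1, x i = p i j.

(* 0-based nat access to a column vector (0 outside the range) *)
Definition vnat m (v : 'cV[R]_m) (k : nat) : R :=
  match (insub k : option 'I_m) with Some o => v o 0 | None => 0 end.

(* z in R^d holds z_1..z_d as v 0 .. v (d-1);  zext gives z_0 = 1, z_{d+1} = 0 *)
Definition zext d (z : 'cV[R]_d) (k : nat) : R :=
  if k == 0%N then 1 else if (k <= d)%N then vnat z k.-1 else 0.

Definition Tmap d (z : 'cV[R]_d) : 'cV[R]_(d.+1) :=
  \col_(j < d.+1) (zext z j - zext z j.+1).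

(* T^{-1} : z_j = sum_{k=j}^{d} lambda_k, j = 1..d (stored at index j-1) *)
Definition Tinv d (lam : 'cV[R]_(d.+1)) : 'cV[R]_d :=
  \col_(m < d) \sum_(k < d.+1 | (m.+1 <= k)%N) lam k 0.

Definition Pmat d (s : {perm 'I_d.+1}) : 'M[R]_(d.+1) :=
  \matrix_(j, k) ((j == s k)%:R).

Definition Lmap d (s : {perm 'I_d.+1}) (z : 'cV[R]_d) : 'cV[R]_d :=
  Tinv (Pmat s *m Tmap z).

Definition grid_val n (d : 'I_n -> nat) (p : forall i, 'I_(d i).+1 -> R)
  (s : forall i, {perm 'I_(d i).+1}) (h : 'I_n -> R -> R)
  (F : ('I_n -> R) -> R) (j : 'I_n -> nat) : R :=
  F (fun i => h i (p i (s i (inord (j i))))).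

(* staircases: sequences of pi_t(1) in which each i occurs exactly d_i times *)
Definition is_staircase n (d : 'I_n -> nat) (pi : seq 'I_n) :=
  forall i, count_mem i pi = d i.

(* sum_{t} (Psi(j^t) - Psi(j^{t-1})) s'_{pi_t}, with j^t = j^{t-1} + e_{pi_t(1)}
   and pi_t(2) = j^t_{pi_t(1)} *)
Fixpoint stair_sum n (Psi : ('I_n -> nat) -> R) (sp : 'I_n -> nat -> R)
  (prev : 'I_n -> nat) (pi : seq 'I_n) : R :=
  match pi with
  | [::] => 0
  | i :: pi' =>
      let next := fun k => (prev k + (k == i))%N in
      (Psi next - Psi prev) * sp i (next i) + stair_sum Psi sp next pi'
  end.

Definition stair_val n (Psi : ('I_n -> nat) -> R) (sp : 'I_n -> nat -> R)
  (rho : R) (pi : seq 'I_n) : R :=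
  Psi (fun _ => 0%N) * rho + stair_sum Psi sp (fun _ => 0%N) pi.

Definition sprime n (d : 'I_n -> nat) (A : forall i, 'M[R]_(d i))
  (c : forall i, 'cV[R]_(d i)) (rho : R) (s : forall i, 'cV[R]_(d i))
  (i : 'I_n) : 'cV[R]_(d i) := A i *m s i + rho *: c i.

(* feasibility of (mu, rho, s) in the LP; s_{i,k} (k = 1..d_i) is vnat (s i) (k-1) *)
Definition lp_feasible n (d : 'I_n -> nat) (Psi Theta : ('I_n -> nat) -> R)
  (A : forall i, 'M[R]_(d i)) (c : forall i, 'cV[R]_(d i))
  (mu rho : R) (s : forall i, 'cV[R]_(d i)) : Prop :=
  let sp := fun i k => vnat (sprime A c rho s i) k.-1 in
  [/\ (forall pi, is_staircase d pi ->
         stair_val Psi sp rho pi <= mu /\ 1 <= stair_val Theta sp rho pi),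
      (forall i, vnat (s i) 0 <= rho),
      (forall i k, (k.+1 < d i)%N -> vnat (s i) k.+1 <= vnat (s i) k) &
      (forall i, 0 <= vnat (s i) (d i).-1)].

Definition lp_optimal_value n (d : 'I_n -> nat) (Psi Theta : ('I_n -> nat) -> R)
  (A : forall i, 'M[R]_(d i)) (c : forall i, 'cV[R]_(d i)) (m : R) : Prop :=
  (exists rho s, @lp_feasible n d Psi Theta A c m rho s) /\
  (forall mu rho s, @lp_feasible n d Psi Theta A c mu rho s -> m <= mu).

End Defs.
Arguments lp_optimal_value {R n} d Psi Theta A c m.
Arguments lp_feasible {R n} d Psi Theta A c mu rho s.
Arguments Lmap {R d} s z.

From HB Require Import structures.
From mathcomp Require Import all_boot all_order all_algebra all_fingroup.
From mathcomp Require Import reals boolp.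
From mathcomp Require Import ring lra zify.
Import Order.TTheory GRing.Theory Num.Theory.
Set Implicit Arguments.
Unset Strict Implicit.
Unset Printing Implicit Defensive.
Local Open Scope ring_scope.

(* Let r = ψ(k)/θ(k) be the minimal ratio, attained at the grid point k.

   The constraints on s_i say s_i ∈ ρ·Δ with
   Δ = {1 ≥ z_1 ≥ ... ≥ z_d ≥ 0}.  On Δ the map T gives nonnegative
   coordinates summing to 1 and T ∘ L^σ = P^σ ∘ T permutes them, so L^σ
   preserves Δ and s'_i ∈ ρ·Δ as well.  Along the staircase that visits the
   entries of all the s'_i in decreasing order, Abel summation turns both LP
   expressions into combinations of values of ψ, resp. θ, with the same
   nonnegative weights; as ψ ≥ r·θ pointwise, μ ≥ (ψ-expression)
   ≥ r·(θ-expression) ≥ r.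

   Take ρ = 1/θ(k) and s'_i = ρ·(1,...,1,0,...,0) with k_i
   ones.  Along any staircase only the steps below k count; since
   f_i ∘ p_i ∘ σ_i is nondecreasing, ψ and -θ are submodular on the grid, so
   the expressions are at most ρ·ψ(k) = r, resp. at least ρ·θ(k) = 1. *)

Section DescendingVectors.
Variable R : realType.
Implicit Types (d : nat) (r : R).

Lemma vnat_ord d (w : 'cV[R]_d) (m : 'I_d) : vnat w m = w m 0.
Proof. by rewrite /vnat valK. Qed.

Lemma vnat_out d (w : 'cV[R]_d) m : (d <= m)%N -> vnat w m = 0.
Proof. by move=> le_dm; rewrite /vnat insubF // ltnNge le_dm. Qed.

Lemma vnatZ d a (w : 'cV[R]_d) m : vnat (a *: w) m = a * vnat w m.
Proof. by rewrite /vnat; case: insubP => [o _ _|_]; rewrite ?mxE ?mulr0. Qed.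

Definition zhom d r (w : 'cV[R]_d) (k : nat) : R :=
  if k == 0%N then r else if (k <= d)%N then vnat w k.-1 else 0.

Lemma zhom_vnat d r (w : 'cV[R]_d) k : (0 < k)%N -> zhom r w k = vnat w k.-1.
Proof.
rewrite /zhom; case: k => // k _ /=; case: leqP => // lt_dk.
by rewrite vnat_out.
Qed.

Lemma zhom_out d r (w : 'cV[R]_d) k : (d < k)%N -> zhom r w k = 0.
Proof. by case: k => // k lt_dk; rewrite /zhom /= leqNgt lt_dk. Qed.

Lemma zhom0 d k : zhom 0 (0 : 'cV[R]_d) k = 0.
Proof.
rewrite /zhom /vnat; case: eqP => // _; case: leqP => // _.
by case: insubP => // o _ _; rewrite mxE.
Qed.

Lemma zhomZ d a r (w : 'cV[R]_d) k : zhom (a * r) (a *: w) k = a * zhom r w k.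
Proof. by rewrite /zhom; case: eqP => // _; case: leqP; rewrite ?vnatZ ?mulr0. Qed.

(* r >= w_1 >= ... >= w_d >= 0, the form of the LP constraints on s_i *)
Definition descending d r (w : 'cV[R]_d) := forall k, zhom r w k.+1 <= zhom r w k.

Lemma descending_bounds d r (w : 'cV[R]_d) :
  descending r w -> forall k, 0 <= zhom r w k <= r.
Proof.
move=> /Order.NatMonotonyTheory.nonincnP dec k.
have z_end : zhom r w d.+1 = 0 by rewrite zhom_out.
have r_ge0 : 0 <= r by rewrite -z_end (dec d.+1 0%N).
case: (leqP k d.+1) => [le_kd|lt_dk]; last by rewrite zhom_out ?lexx ?(ltnW lt_dk).
by apply/andP; split; [rewrite -z_end; apply: dec | apply: (dec k 0%N)].
Qed.

Lemma descending_ge0 d r (w : 'cV[R]_d) : descending r w -> 0 <= r.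
Proof. by move=> /descending_bounds/(_ 0%N)/andP[]. Qed.

Lemma descending0 d (w : 'cV[R]_d) : descending 0 w -> w = 0.
Proof.
move=> /descending_bounds bnd; apply/matrixP => m z; rewrite (ord1 z) mxE.
have := bnd m.+1; rewrite zhom_vnat // vnat_ord.
by move=> w_m; apply/eqP; rewrite eq_le andbC.
Qed.

Lemma descendingZ d a r (w : 'cV[R]_d) :
  0 < a -> descending r w -> descending (a * r) (a *: w).
Proof. by move=> a_gt0 dec k; rewrite !zhomZ ler_pM2l. Qed.

Lemma descendingP d r (w : 'cV[R]_d) : (0 < d)%N ->
  [/\ vnat w 0 <= r, (forall k, (k.+1 < d)%N -> vnat w k.+1 <= vnat w k)
    & 0 <= vnat w d.-1] <-> descending r w.
Proof.
move=> d_gt0; split=> [[w0 w_dec w_end] [|k]|dec].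
- by rewrite zhom_vnat.
- rewrite !zhom_vnat //=; case: (ltngtP k.+1 d) => [/w_dec //|lt_dk|eq_kd].
    by rewrite !vnat_out // ltnW.
  by rewrite vnat_out ?eq_kd // [k](_ : _ = d.-1) -?eq_kd.
- split=> [|k lt_kd|].
  + by have := dec 0%N; rewrite zhom_vnat.
  + by have := dec k.+1; rewrite !zhom_vnat.
  + by have := dec d; rewrite !zhom_vnat // [vnat w d]vnat_out.
Qed.

End DescendingVectors.

Section AffineMaps.
Variables (R : realType) (d : nat).
Implicit Types (w : 'cV[R]_d) (lam : 'cV[R]_d.+1) (s : {perm 'I_d.+1}).

Lemma sum_Tmap_from w k : (k <= d.+1)%N ->
  \sum_(j < d.+1 | (k <= j)%N) Tmap w j 0 = zext w k.
Proof.
move=> le_kd; under eq_bigr do rewrite mxE.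
rewrite -(big_geq_mkord _ _ xpredT (fun j => zext w j - zext w j.+1)) /=.
rewrite (@telescope_sumr_eq _ k d.+1 (fun j => - zext w j)) => [|//|j _].
  by rewrite /zext /= ltnn oppr0 sub0r opprK.
by rewrite opprK addrC.
Qed.

Lemma zext_Tinv lam k : \sum_(j < d.+1) lam j 0 = 1 -> (k <= d.+1)%N ->
  zext (Tinv lam) k = \sum_(j < d.+1 | (k <= j)%N) lam j 0.
Proof.
move=> sum1; case: k => [|k] le_kd; first by rewrite sum1.
case: (ltnP k d) => [lt_kd|le_dk].
  by rewrite /zext /= lt_kd (vnat_ord _ (Ordinal lt_kd)) mxE.
have -> : k = d by lia.
by rewrite /zext /= ltnn big_pred0 // => j; rewrite ltnNge -ltnS ltn_ord.
Qed.

Lemma TmapK : cancel (@Tmap R d) (@Tinv R d).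
Proof.
move=> w; apply/matrixP => m z; rewrite (ord1 z) [in LHS]mxE sum_Tmap_from.
  by rewrite /zext /= (ltn_ord m) vnat_ord.
exact: ltnW (ltn_ord m).
Qed.

Lemma TinvK lam : \sum_(j < d.+1) lam j 0 = 1 -> Tmap (Tinv lam) = lam.
Proof.
move=> sum1; apply/matrixP => j z; rewrite (ord1 z) mxE.
rewrite !zext_Tinv ?(ltnW (ltn_ord j)) ?ltn_ord // (bigD1 j) ?leqnn //=.
rewrite (eq_bigl (fun k : 'I_d.+1 => (j < k)%N)) ?addrK // => k /=.
by rewrite ltn_neqAle andbC eq_sym.
Qed.

Lemma Pmat_mulE s lam j : (Pmat R s *m lam) j 0 = lam ((s^-1)%g j) 0.
Proof.
rewrite mxE (bigD1 ((s^-1)%g j)) //= mxE permKV eqxx mul1r big1 ?addr0 // => k nk.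
by rewrite mxE (_ : (j == s k) = false) ?mul0r //; apply: contraNF nk => /eqP ->; rewrite permK.
Qed.

Lemma sum_Pmat s lam : \sum_(j < d.+1) (Pmat R s *m lam) j 0 = \sum_(j < d.+1) lam j 0.
Proof.
under eq_bigr do rewrite Pmat_mulE.
by rewrite (reindex_inj (@perm_inj _ s)); under eq_bigr do rewrite permK.
Qed.

Lemma Tmap_Lmap s w : Tmap (Lmap s w) = Pmat R s *m Tmap w.
Proof.
apply: TinvK; rewrite sum_Pmat (eq_bigl (fun j : 'I_d.+1 => (0 <= j)%N)) //.
by rewrite sum_Tmap_from.
Qed.

Lemma Lmap_inj s : injective (@Lmap R d s).
Proof.
move=> w1 w2 eq_w; apply: (can_inj TmapK); apply/matrixP => j z; rewrite (ord1 z).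
have := congr1 (fun v : 'cV[R]_d.+1 => v (s j) 0) (Tmap_Lmap s w1).
by rewrite eq_w Tmap_Lmap !Pmat_mulE permK => ->.
Qed.

End AffineMaps.

Section DescendingAffine.
Variables (R : realType) (d : nat).
Implicit Types (r : R) (w : 'cV[R]_d) (s : {perm 'I_d.+1}).

Lemma descending1_Tmap w : descending 1 w <-> forall j, 0 <= Tmap w j 0.
Proof.
split=> [dec j|nn k]; first by rewrite mxE subr_ge0; apply: dec.
case: (ltnP k d.+1) => [lt_kd|le_dk]; first by have := nn (Ordinal lt_kd); rewrite mxE subr_ge0.
by rewrite !zhom_out // ltnW.
Qed.

Lemma descending1_Lmap s w : descending 1 (Lmap s w) <-> descending 1 w.
Proof.
rewrite !descending1_Tmap Tmap_Lmap; split=> nn j; rewrite ?Pmat_mulE //.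
by have := nn (s j); rewrite Pmat_mulE permK.
Qed.

Variables (s : {perm 'I_d.+1}) (A : 'M[R]_d) (c : 'cV[R]_d).
Hypothesis LmapA : forall z, Lmap s (A *m z + c) = z.

Lemma Lmap_affineK w : A *m Lmap s w + c = w.
Proof. by apply: (@Lmap_inj R d s); rewrite LmapA. Qed.

Lemma descending_affine r w :
  descending r w -> descending r (A *m w + r *: c).
Proof.
move=> dec; have r_ge0 := descending_ge0 dec.
case: (eqVneq r 0) => [r0|r_neq0].
  move: dec; rewrite r0 => /descending0 ->.
  by rewrite mulmx0 scale0r addr0 => k; rewrite !zhom0.
have r_gt0 : 0 < r by rewrite lt_def r_neq0.
set u := r^-1 *: w.
have dec_u : descending 1 u by rewrite -(mulVf r_neq0); apply: descendingZ; rewrite ?invr_gt0.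
have -> : A *m w + r *: c = r *: (A *m u + c).
  by rewrite scalerDr scalemxAr scalerA divff // scale1r.
rewrite -[r in descending r]mulr1; apply: descendingZ => //.
by apply/(descending1_Lmap s); rewrite LmapA.
Qed.

End DescendingAffine.

Section Staircases.
Variables (R : realType) (n : nat).
Implicit Types (F G : ('I_n -> nat) -> R) (sp : 'I_n -> nat -> R) (pi : seq 'I_n).

Fixpoint chain sp (prev : 'I_n -> nat) pi (b : R) : Prop :=
  match pi with
  | [::] => True
  | i :: pi' =>
      let next := fun k => (prev k + (k == i))%N in
      0 <= sp i (next i) <= b /\ chain sp next pi' (sp i (next i))
  end.

Lemma stair_sumZ a F sp prev pi :
  stair_sum (fun j => a * F j) sp prev pi = a * stair_sum F sp prev pi.
Proof. by elim: pi prev => [|i pi IH] prev /=; rewrite ?mulr0 // IH; ring. Qed.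

Lemma stair_sumN F sp prev pi :
  stair_sum (fun j => - F j) sp prev pi = - stair_sum F sp prev pi.
Proof. by elim: pi prev => [|i pi IH] prev /=; rewrite ?oppr0 // IH; ring. Qed.

(* Along a chain, b F(prev) + stair_sum F is a combination of values of F with
   nonnegative weights b - s_1, s_1 - s_2, ... *)
Lemma stair_sum_chain_le F G sp : (forall j, F j <= G j) ->
  forall pi prev b, 0 <= b -> chain sp prev pi b ->
  b * F prev + stair_sum F sp prev pi <= b * G prev + stair_sum G sp prev pi.
Proof.
move=> le_FG; elim=> [|i pi IH] prev b b_ge0 /=; first by rewrite !addr0 ler_wpM2l.
set next := fun k => _; set a := sp i (next i) => -[/andP[a_ge0 le_ab] ch].
have := IH next a a_ge0 ch; have := le_FG prev.
set SF := stair_sum F _ _ _; set SG := stair_sum G _ _ _.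
nra.
Qed.

(* Greedy construction: always step in a coordinate whose next weight is
   largest; since weights decrease in k, no later weight exceeds it. *)
Lemma exists_chain (d : 'I_n -> nat) sp :
  (forall i k, (0 < k)%N -> 0 <= sp i k) ->
  (forall i k, (0 < k)%N -> sp i k.+1 <= sp i k) ->
  forall prev b, (forall i, prev i <= d i)%N ->
  (forall i, (prev i < d i)%N -> sp i (prev i).+1 <= b) ->
  exists2 pi, (forall i, prev i + count_mem i pi = d i)%N & chain sp prev pi b.
Proof.
move=> sp_ge0 sp_dec prev b.
move Em : (\sum_i (d i - prev i))%N => m.
elim: m prev b Em => [|m IH] prev b Em le_pd sp_le.
  exists [::] => // i /=.
  have : (d i - prev i <= \sum_i (d i - prev i))%N by rewrite (bigD1 i) //= leq_addr.
  by have := le_pd i; lia.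
have [i0 lt_i0] : exists i0, (prev i0 < d i0)%N.
  apply/existsP; apply: contraT => /existsPn none.
  by move: Em; rewrite big1 // => i _; apply/eqP; rewrite subn_eq0 leqNgt none.
have [im lt_im max_im] := @arg_maxP _ _ _ i0 (fun i => prev i < d i)%N
  (fun i => sp i (prev i).+1) lt_i0.
pose next k := (prev k + (k == im))%N.
have Em' : (\sum_i (d i - next i))%N = m.
  rewrite (bigD1 im) //= in Em; rewrite (bigD1 im) //= /next eqxx.
  rewrite (eq_bigr (fun i => d i - prev i)%N) => [|i /negbTE ->]; last by rewrite addn0.
  by lia.
have [pi count_pi ch] : exists2 pi, (forall i, next i + count_mem i pi = d i)%N &
    chain sp next pi (sp im (prev im).+1).
  apply: IH Em' _ _ => i; rewrite /next;
    case: (eqVneq i im) => [->|_] /=; rewrite ?addn1 ?addn0 //.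
  - by move=> _; apply: sp_dec.
  - exact: max_im.
exists (im :: pi) => [i|] /=.
  by rewrite addnA [im == i]eq_sym; apply: count_pi.
by rewrite (eqxx im) addn1 sp_ge0 //= sp_le.
Qed.

Lemma staircase_chain_of_descending (d : 'I_n -> nat) r (w : forall i, 'cV[R]_(d i)) :
  (forall i, descending r (w i)) ->
  exists2 pi, is_staircase d pi & chain (fun i k => vnat (w i) k.-1) (fun _ => 0%N) pi r.
Proof.
move=> dec; have [pi count_pi ch] : exists2 pi, (forall i, 0 + count_mem i pi = d i)%N &
    chain (fun i k => vnat (w i) k.-1) (fun _ => 0%N) pi r.
  apply: exists_chain => [i k k_gt0|i k k_gt0|//|i _]; rewrite -?(zhom_vnat r) //.
  - by have /andP[] := descending_bounds (dec i) k.
  - exact: dec.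
  - exact: (dec i 0%N).
by exists pi.
Qed.

Definition grid_submodular (d : 'I_n -> nat) F :=
  forall x y, (forall i, x i <= d i)%N -> (forall i, y i <= d i)%N ->
  F (fun i => maxn (x i) (y i)) + F (fun i => minn (x i) (y i)) <= F x + F y.

Lemma grid_submodular_step d F (x k : 'I_n -> nat) i :
  grid_submodular d F -> (forall l, x l <= d l)%N -> (forall l, k l <= d l)%N ->
  (x i < k i)%N ->
  F (fun l => x l + (l == i))%N - F x <=
  F (fun l => minn (x l + (l == i)) (k l))%N - F (fun l => minn (x l) (k l)).
Proof.
move=> subF le_xd le_kd lt_xk.
have := subF x (fun l => minn (x l + (l == i)) (k l))%N le_xd
  (fun l => leq_trans (geq_minr _ _) (le_kd l)).
have -> : (fun l => maxn (x l) (minn (x l + (l == i)) (k l)))%N = (fun l => x l + (l == i))%N.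
  by apply: funext => l; case: (eqVneq l i) => [->|_] /=; lia.
have -> : (fun l => minn (x l) (minn (x l + (l == i)) (k l)))%N = (fun l => minn (x l) (k l)).
  by apply: funext => l; case: (eqVneq l i) => [->|_] /=; lia.
lra.
Qed.

Section IndicatorWeights.
Variables (d : 'I_n -> nat) (F : ('I_n -> nat) -> R) (k : 'I_n -> nat) (rho : R).
Variable sp : 'I_n -> nat -> R.
Hypotheses (subF : grid_submodular d F) (le_kd : forall i, (k i <= d i)%N).
Hypotheses (rho_ge0 : 0 <= rho)
  (spE : forall i m, (0 < m)%N -> sp i m = if (m <= k i)%N then rho else 0).

Lemma stair_sum_indicator_le pi prev :
  (forall i, prev i + count_mem i pi = d i)%N ->
  rho * F (fun i => minn (prev i) (k i)) + stair_sum F sp prev pi <= rho * F k.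
Proof.
elim: pi prev => [|i pi IH] prev count_pi /=.
  have -> : (fun i => minn (prev i) (k i)) = k.
    by apply: funext => l; have := count_pi l; have := le_kd l; rewrite /= addn0; lia.
  by rewrite addr0.
set next := fun l => (prev l + (l == i))%N.
have le_prev l : (prev l <= d l)%N by rewrite -(count_pi l) leq_addr.
have count_next l : (next l + count_mem l pi = d l)%N.
  by rewrite /next -(count_pi l) /= [l == i]eq_sym addnA.
have {count_next}IH := IH next count_next; rewrite /next in IH *.
rewrite spE (eqxx i) addn1 //; case: (ltnP (prev i) (k i)) => [lt_ik|le_ki].
  have := ler_wpM2l rho_ge0 (grid_submodular_step subF le_prev le_kd lt_ik).
  move: IH; set Fn := F (fun l => _ + _)%N; set Fmn := F (fun l => minn _ _).
  set Fmp := F (fun l => minn _ _); set S := stair_sum _ _ _ _.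
  lra.
rewrite mulr0 add0r; congr (_ * F _ + _ <= _): IH.
by apply: funext => l; case: (eqVneq l i) => [->|] /=; lia.
Qed.

Lemma stair_val_indicator_le pi : is_staircase d pi -> stair_val F sp rho pi <= rho * F k.
Proof.
move=> stair; have := @stair_sum_indicator_le pi (fun _ => 0%N) stair.
have -> : (fun i => minn 0 (k i)) = (fun _ => 0%N) by apply: funext => i; rewrite min0n.
by rewrite /stair_val mulrC.
Qed.

End IndicatorWeights.

End Staircases.

Section Grid.
Variables (R : realType) (n : nat) (d : 'I_n -> nat).
Implicit Types (p : forall i, 'I_(d i).+1 -> R) (sigma : forall i, {perm 'I_(d i).+1}).

Lemma in_X_grid p sigma x : in_X p x ->
  exists2 k : 'I_n -> nat, (forall i, k i <= d i)%N & x = (fun i => p i (sigma i (inord (k i)))).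
Proof.
move=> xX; have /choice[k kP] : forall i, exists m,
    (m <= d i)%N /\ x i = p i (sigma i (inord m)).
  move=> i; have [j ->] := xX i.
  by exists ((sigma i)^-1 j)%g; rewrite -ltnS ltn_ord inord_val permKV.
by exists k; [move=> i; case: (kP i) | apply: funext => i; case: (kP i)].
Qed.

Lemma supermodular_oppr (lo hi : 'I_n -> R) (phi : ('I_n -> R) -> R) :
  supermodular_on lo hi phi -> submodular_on lo hi (fun x => - phi x).
Proof. by move=> sup x y x_box y_box; have := sup x y x_box y_box; lra. Qed.

Lemma grid_val_submodular p sigma (h : 'I_n -> R -> R) (lo hi : 'I_n -> R)
    (phi : ('I_n -> R) -> R) :
  (forall i j, lo i <= h i (p i j) <= hi i) ->
  (forall i (j k : 'I_(d i).+1), (j <= k)%N -> h i (p i (sigma i j)) <= h i (p i (sigma i k))) ->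
  submodular_on lo hi phi -> grid_submodular d (grid_val p sigma h phi).
Proof.
move=> box mono sub x y le_xd le_yd.
pose v i m := h i (p i (sigma i (inord m))).
have v_mono i a b : (a <= b)%N -> (b <= d i)%N -> v i a <= v i b.
  by move=> le_ab le_bd; apply: mono; rewrite !inordK // ltnS // (leq_trans le_ab).
have := sub (fun i => v i (x i)) (fun i => v i (y i)) (fun i => box _ _) (fun i => box _ _).
have -> : (fun i => Num.max (v i (x i)) (v i (y i))) = (fun i => v i (maxn (x i) (y i))).
  apply: funext => i; case: (leqP (x i) (y i)) => [le_xy|/ltnW le_yx].
    by rewrite max_r // v_mono.
  by rewrite max_l // v_mono.
have -> : (fun i => Num.min (v i (x i)) (v i (y i))) = (fun i => v i (minn (x i) (y i))).
  apply: funext => i; case: (leqP (x i) (y i)) => [le_xy|/ltnW le_yx].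
    by rewrite min_l // v_mono.
  by rewrite min_r // v_mono.
by [].
Qed.

End Grid.

Section LinearProgram.
Variables (R : realType) (n : nat) (d : 'I_n -> nat).
Variables (sigma : forall i, {perm 'I_(d i).+1}).
Variables (A : forall i, 'M[R]_(d i)) (c : forall i, 'cV[R]_(d i)).
Variables (Psi Theta : ('I_n -> nat) -> R).
Hypotheses (d_gt0 : forall i, (0 < d i)%N)
  (LmapA : forall i z, Lmap (sigma i) (A i *m z + c i) = z).

Lemma lp_feasible_ge r mu rho s : (0 < n)%N -> 0 <= r -> (forall j, r * Theta j <= Psi j) ->
  lp_feasible d Psi Theta A c mu rho s -> r <= mu.
Proof.
move=> n_gt0 r_ge0 le_rTP [stair_ok s0 s_dec s_end].
have dec_s i : descending rho (s i).
  by apply/(descendingP _ _ (d_gt0 i)); split; [apply: s0 | apply: s_dec | apply: s_end].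
have rho_ge0 := descending_ge0 (dec_s (Ordinal n_gt0)).
have dec_s' i : descending rho (sprime A c rho s i) := descending_affine (@LmapA i) (dec_s i).
have [pi stair ch] := staircase_chain_of_descending dec_s'.
have [] := stair_ok pi stair; rewrite /stair_val.
have := @stair_sum_chain_le _ _ (fun j => r * Theta j) Psi _ le_rTP _ _ _ rho_ge0 ch.
rewrite stair_sumZ; set P0 := Psi _; set T0 := Theta _.
set SP := stair_sum Psi _ _ _; set ST := stair_sum Theta _ _ _.
nra.
Qed.

Lemma lp_feasible_at (k : 'I_n -> nat) :
  (forall i, k i <= d i)%N -> grid_submodular d Psi ->
  grid_submodular d (fun j => - Theta j) -> 0 < Theta k ->
  exists rho s, lp_feasible d Psi Theta A c (Psi k / Theta k) rho s.
Proof.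
move=> le_kd subPsi subTheta Theta_gt0.
set rho := (Theta k)^-1; have rho_gt0 : 0 < rho by rewrite invr_gt0.
pose w i : 'cV[R]_(d i) := \col_(m < d i) (if (m < k i)%N then 1 else 0).
have zhom_w i m : zhom 1 (w i) m = if (m <= k i)%N then 1 else 0.
  case: m => [|m] //; rewrite zhom_vnat //=; case: (ltnP m (d i)) => [lt_md|le_dm].
    by rewrite (vnat_ord _ (Ordinal lt_md)) mxE.
  by rewrite vnat_out // (_ : (m < k i)%N = false) //; have := le_kd i; lia.
have dec_w i : descending 1 (w i).
  by move=> m; rewrite !zhom_w; do 2 case: ifP => ?; rewrite ?lexx ?ler01 //; lia.
pose s i := rho *: Lmap (sigma i) (w i).
have spE i m : (0 < m)%N ->
    vnat (sprime A c rho s i) m.-1 = if (m <= k i)%N then rho else 0.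
  move=> m_gt0; rewrite /sprime /s -scalemxAr -scalerDr Lmap_affineK //.
  by rewrite vnatZ -(zhom_vnat 1) // zhom_w; case: ifP; rewrite ?mulr1 ?mulr0.
have dec_s i : descending rho (s i).
  by rewrite -[rho]mulr1; apply: descendingZ => //; apply/descending1_Lmap.
have s_lp i := (descendingP _ _ (d_gt0 i)).2 (dec_s i).
exists rho, s; split=> [pi stair|i|i|i]; [|by case: (s_lp i) ..].
have rho_ge0 := ltW rho_gt0.
split; first by rewrite mulrC; have := stair_val_indicator_le subPsi le_kd rho_ge0 spE stair.
have := stair_val_indicator_le subTheta le_kd rho_ge0 spE stair.
have rho_Theta : rho * Theta k = 1 by rewrite mulVf ?gt_eqF.
rewrite /stair_val stair_sumN mulNr mulrN rho_Theta; lra.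
Qed.

End LinearProgram.

Theorem theorem4 (R : realType) (n : nat) (d : 'I_n -> nat)
  (p : forall i : 'I_n, 'I_(d i).+1 -> R)
  (L U L' U' : 'I_n -> R) (f g : 'I_n -> R -> R)
  (phi vphi : ('I_n -> R) -> R)
  (sigma : forall i : 'I_n, {perm 'I_(d i).+1})
  (A : forall i : 'I_n, 'M[R]_(d i)) (c : forall i : 'I_n, 'cV[R]_(d i)) :
  (0 < n)%N ->
  (forall i, 0 < d i)%N ->
  (forall i (j k : 'I_(d i).+1), (j < k)%N -> p i j < p i k) ->
  (forall i (j : 'I_(d i).+1), L i <= f i (p i j) <= U i) ->
  (forall i (j : 'I_(d i).+1), L' i <= g i (p i j) <= U' i) ->
  submodular_on L U phi ->
  supermodular_on L' U' vphi ->
  (forall x, in_X p x -> 0 <= phi (fun i => f i (x i))) ->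
  (forall x, in_X p x -> 0 < vphi (fun i => g i (x i))) ->
  (forall i (j k : 'I_(d i).+1), (j <= k)%N ->
     f i (p i (sigma i j)) <= f i (p i (sigma i k)) /\
     g i (p i (sigma i j)) <= g i (p i (sigma i k))) ->
  (* (L^{sigma_i})^{-1}(z) = A_i z + c_i *)
  (forall i (z : 'cV[R]_(d i)), Lmap (sigma i) (A i *m z + c i) = z) ->
  forall xs : 'I_n -> R, in_X p xs ->
  (forall x, in_X p x ->
     phi (fun i => f i (xs i)) / vphi (fun i => g i (xs i))
       <= phi (fun i => f i (x i)) / vphi (fun i => g i (x i))) ->
  lp_optimal_value d (grid_val p sigma f phi) (grid_val p sigma g vphi) A c
    (phi (fun i => f i (xs i)) / vphi (fun i => g i (xs i))).
Proof.
move=> n_gt0 d_gt0 _ f_box g_box phi_sub vphi_sup phi_ge0 vphi_gt0 sigma_mono LmapA.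
move=> xs /(in_X_grid sigma)[k le_kd ->] xs_min.
set Psi := grid_val p sigma f phi; set Theta := grid_val p sigma g vphi.
have grid_X j : in_X p (fun i => p i (sigma i (inord (j i)))) by move=> i; eexists.
have Theta_gt0 j : 0 < Theta j := vphi_gt0 _ (grid_X j).
split.
  apply: lp_feasible_at => //.
    by apply: grid_val_submodular f_box _ phi_sub => i j j' /sigma_mono[].
  by apply: grid_val_submodular g_box _ (supermodular_oppr vphi_sup) => i j j' /sigma_mono[].
move=> mu rho s; apply: lp_feasible_ge => //.
  by rewrite divr_ge0 ?(ltW (Theta_gt0 k)) ?(phi_ge0 _ (grid_X k)).
by move=> j; rewrite -ler_pdivlMr //; apply: xs_min.
Qed.
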